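(* Let $S$ be a semigroup and $\mu$ a finitely-additive probability measure on $S$. If $\mu$ is right fairly invariant, then any two $\mathcal L$-classes contained in the same $\mathcal D$-class have equal $\mu$-measure. If $\mu$ is left fairly invariant, then any two $\mathcal R$-classes contained in the same $\mathcal D$-class have equal $\mu$-measure. If $\mu$ is both left and right fairly invariant, then any two $\mathcal H$-classes contained in the same $\mathcal D$-class have equal $\mu$-measure.
   Context: Green's relations on $S$: $a\,\mathcal L\,b$ iff $S^1a=S^1b$; $a\,\mathcal R\,b$ iff $aS^1=bS^1$; $\mathcal H=\mathcal L\cap\mathcal R$; $\mathcal D=\mathcal L\circ\mathcal R$. $s$ acts injectively on the left (right) of $A\subseteq S$ if $a\mapsto sa$ ($a\mapsto as$) is injective on $A$. A finitely-additive probability measure is $\mu:\mathcal P(S)\to[0,1]$ with $\mu(S)=1$, additive on disjoint sets; it is left fairly invariant if $\mu(sA)=\mu(A)$ whenever $s$ acts injectively on the left of $A$, right fairly invariant if $\mu(As)=\mu(A)$ whenever $s$ acts injectively on the right of $A$. *)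

From Stdlib Require Import Reals.
Open Scope R_scope.

Record Semigroup := {
  carrier :> Type;
  mul : carrier -> carrier -> carrier;
  mulA : forall x y z, mul x (mul y z) = mul (mul x y) z
}.

Section Defs.
Variable S : Semigroup.
Local Notation "x * y" := (mul S x y).

Definition S1_left (a : S) : S -> Prop := fun x => x = a \/ exists s, x = s * a.
Definition S1_right (a : S) : S -> Prop := fun x => x = a \/ exists s, x = a * s.

Definition greenL (a b : S) : Prop := forall x, S1_left a x <-> S1_left b x.
Definition greenR (a b : S) : Prop := forall x, S1_right a x <-> S1_right b x.
Definition greenH (a b : S) : Prop := greenL a b /\ greenR a b.
Definition greenD (a b : S) : Prop := exists c, greenL a c /\ greenR c b.

Definition Lclass (a : S) : S -> Prop := fun x => greenL a x.
Definition Rclass (a : S) : S -> Prop := fun x => greenR a x.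
Definition Hclass (a : S) : S -> Prop := fun x => greenH a x.

Definition lmul_set (s : S) (A : S -> Prop) : S -> Prop :=
  fun y => exists a, A a /\ y = s * a.
Definition rmul_set (A : S -> Prop) (s : S) : S -> Prop :=
  fun y => exists a, A a /\ y = a * s.

Definition acts_inj_left (s : S) (A : S -> Prop) : Prop :=
  forall a b, A a -> A b -> s * a = s * b -> a = b.
Definition acts_inj_right (s : S) (A : S -> Prop) : Prop :=
  forall a b, A a -> A b -> a * s = b * s -> a = b.

Definition fa_prob_measure (mu : (S -> Prop) -> R) : Prop :=
  (forall A, 0 <= mu A <= 1) /\
  mu (fun _ => True) = 1 /\
  (forall A B : S -> Prop, (forall x, A x -> B x -> False) ->
     mu (fun x => A x \/ B x) = mu A + mu B).

Definition left_fairly_invariant (mu : (S -> Prop) -> R) : Prop :=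
  forall (s : S) (A : S -> Prop), acts_inj_left s A -> mu (lmul_set s A) = mu A.
Definition right_fairly_invariant (mu : (S -> Prop) -> R) : Prop :=
  forall (s : S) (A : S -> Prop), acts_inj_right s A -> mu (rmul_set A s) = mu A.
End Defs.

From Stdlib Require Import Reals FunctionalExtensionality PropExtensionality.
Open Scope R_scope.

(* Everything rests on Green's lemma: if a R b, say b = a t' and
   a = b t, then right multiplication by t' maps the L-class of a bijectively
   onto the L-class of b, with inverse right multiplication by t, and it keeps
   every element in its R-class, so it also maps H_a onto H_b.  A right fairly
   invariant measure therefore gives L_a and L_b (and H_a and H_b) the same
   measure.  Since a D b means a L c R b for some c, and L_a = L_c, this settles
   L-classes.  R-classes follow by duality: the opposite semigroup swaps L and R
   and swaps left and right fair invariance, all by mere conversion.  For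
   H-classes, a L c is handled by left invariance (in the opposite semigroup)
   and c R b by right invariance. *)

(* The opposite semigroup.  Green's relations L and R, the sets S^1 a and a S^1,
   and left and right translates are exchanged by it, definitionally. *)
Definition Sop (S : Semigroup) : Semigroup :=
  {| carrier := carrier S; mul := fun x y => mul S y x;
     mulA := fun x y z => eq_sym (mulA S z y x) |}.

Lemma mu_ext (S : Semigroup) (mu : (S -> Prop) -> R) (A B : S -> Prop) :
  (forall x, A x <-> B x) -> mu A = mu B.
Proof.
  intro HAB. f_equal. apply functional_extensionality. intro x.
  apply propositional_extensionality. apply HAB.
Qed.

Section GreenL.
Variable S : Semigroup.
Local Notation "x * y" := (mul S x y).

Lemma S1_left_incl a b : S1_left S a b -> forall x, S1_left S b x -> S1_left S a x.
Proof.
  intros Hb x [-> | [s ->]]; [exact Hb |].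
  destruct Hb as [-> | [u ->]].
  - right; exists s; reflexivity.
  - right; exists (s * u); apply mulA.
Qed.

Lemma greenL_intro a b : S1_left S b a -> S1_left S a b -> greenL S a b.
Proof. intros Hab Hba x; split; apply S1_left_incl; assumption. Qed.

Lemma greenL_elim a b : greenL S a b -> S1_left S b a /\ S1_left S a b.
Proof. intro H; split; [apply (H a) | apply (H b)]; left; reflexivity. Qed.

Lemma greenL_sym a b : greenL S a b -> greenL S b a.
Proof. intros H x; symmetry; apply H. Qed.

Lemma greenL_trans a b c : greenL S a b -> greenL S b c -> greenL S a c.
Proof. intros Hab Hbc x. rewrite (Hab x). apply Hbc. Qed.

Lemma Lclass_same a b (x : S) : greenL S a b -> (Lclass S a x <-> Lclass S b x).
Proof.
  intro Hab; split; intro Hx.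
  - exact (greenL_trans b a x (greenL_sym a b Hab) Hx).
  - exact (greenL_trans a b x Hab Hx).
Qed.

Lemma greenL_mulr a b t : greenL S a b -> greenL S (a * t) (b * t).
Proof.
  intro H. destruct (greenL_elim a b H) as [Ha Hb].
  apply greenL_intro.
  - destruct Ha as [-> | [s ->]]; [left | right; exists s; symmetry; apply mulA]; reflexivity.
  - destruct Hb as [-> | [s ->]]; [left | right; exists s; symmetry; apply mulA]; reflexivity.
Qed.

(* A right translation fixing a fixes its whole L-class: x = s a gives
   x t' t = s (a t' t) = s a. *)
Lemma greenL_fix a t' t x : a * t' * t = a -> greenL S a x -> x * t' * t = x.
Proof.
  intros Ha Hx. destruct (greenL_elim a x Hx) as [_ [-> | [u ->]]]; [exact Ha |].
  rewrite <- !mulA, (mulA S a t' t), Ha. reflexivity.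
Qed.

(* If t (s x) = x then x L s x; in the opposite semigroup this reads:
   x s t = x implies x R x s. *)
Lemma greenL_step_left x s t : t * (s * x) = x -> greenL S x (s * x).
Proof.
  intro E. apply greenL_intro.
  - right; exists t; symmetry; exact E.
  - right; exists s; reflexivity.
Qed.

End GreenL.

Section GreenR.
Variable S : Semigroup.
Local Notation "x * y" := (mul S x y).

(* The R-relation of S is the L-relation of the opposite semigroup. *)
Lemma greenR_sym a b : greenR S a b -> greenR S b a.
Proof. exact (greenL_sym (Sop S) a b). Qed.

Lemma greenR_trans a b c : greenR S a b -> greenR S b c -> greenR S a c.
Proof. exact (greenL_trans (Sop S) a b c). Qed.

Lemma Rclass_same a b (x : S) : greenR S a b -> (Rclass S a x <-> Rclass S b x).
Proof. exact (Lclass_same (Sop S) a b x). Qed.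

Lemma greenR_cases a b :
  greenR S a b -> a = b \/ exists t t', a = b * t /\ b = a * t'.
Proof.
  intro H. destruct (greenL_elim (Sop S) a b H) as [[E | [t Ht]] [E' | [t' Ht']]].
  - left; exact E.
  - left; exact E.
  - left; symmetry; exact E'.
  - right; exists t, t'; split; assumption.
Qed.

Lemma greenR_step x t' t : x * t' * t = x -> greenR S x (x * t').
Proof.
  exact (greenL_step_left (Sop S) x t' t).
Qed.

Lemma Hclass_opp a x : Hclass (Sop S) a x <-> Hclass S a x.
Proof. unfold Hclass, greenH. simpl. tauto. Qed.

End GreenR.

Section Transfer.
Variable S : Semigroup.
Local Notation "x * y" := (mul S x y).
Variable mu : (S -> Prop) -> R.
Hypothesis Hr : right_fairly_invariant S mu.

(* Mutually inverse right translations x |-> x s and y |-> y s' between A and B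
   show that B is the injective right translate A s, hence mu A = mu B. *)
Lemma transfer (A B : S -> Prop) s s' :
  (forall x, A x -> x * s * s' = x /\ B (x * s)) ->
  (forall y, B y -> y * s' * s = y /\ A (y * s')) -> mu A = mu B.
Proof.
  intros HA HB. rewrite <- (Hr s A).
  - apply mu_ext. intro y; split.
    + intros [a [Ha ->]]. apply (HA a Ha).
    + intro Hy. exists (y * s'). split; [apply (HB y Hy) | symmetry; apply (HB y Hy)].
  - intros x y Hx Hy E.
    rewrite <- (proj1 (HA x Hx)), <- (proj1 (HA y Hy)), E. reflexivity.
Qed.

(* Green's lemma in measure form: for b = a t' and a = b t, any parts A of L_a
   and B of L_b exchanged by right multiplication with t' and t have equal
   measure, the two translations being inverse to each other on these classes. *)
Lemma green_transfer a b t t' (A B : S -> Prop) :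
  a = b * t -> b = a * t' ->
  (forall x, A x -> greenL S a x /\ B (x * t')) ->
  (forall y, B y -> greenL S b y /\ A (y * t)) -> mu A = mu B.
Proof.
  intros Ha Hb HA HB.
  assert (Ea : a * t' * t = a) by (rewrite <- Hb; symmetry; exact Ha).
  assert (Eb : b * t * t' = b) by (rewrite <- Ha; symmetry; exact Hb).
  apply (transfer A B t' t).
  - intros x Hx. destruct (HA x Hx) as [HxL HxB].
    split; [exact (greenL_fix S a t' t x Ea HxL) | exact HxB].
  - intros y Hy. destruct (HB y Hy) as [HyL HyA].
    split; [exact (greenL_fix S b t t' y Eb HyL) | exact HyA].
Qed.

Lemma Lclass_measure_greenR a b : greenR S a b -> mu (Lclass S a) = mu (Lclass S b).
Proof.
  intro H. destruct (greenR_cases S a b H) as [-> | [t [t' [Ha Hb]]]]; [reflexivity |].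
  apply (green_transfer a b t t' _ _ Ha Hb).
  - intros x Hx. split; [exact Hx |]. unfold Lclass. rewrite Hb. apply greenL_mulr, Hx.
  - intros y Hy. split; [exact Hy |]. unfold Lclass. rewrite Ha. apply greenL_mulr, Hy.
Qed.

(* R-related elements have H-classes of equal measure: right multiplication by
   t' also stays inside the R-class, as x t' R x. *)
Lemma Hclass_measure_greenR a b : greenR S a b -> mu (Hclass S a) = mu (Hclass S b).
Proof.
  intro H. destruct (greenR_cases S a b H) as [-> | [t [t' [Ha Hb]]]]; [reflexivity |].
  assert (Ea : a * t' * t = a) by (rewrite <- Hb; symmetry; exact Ha).
  assert (Eb : b * t * t' = b) by (rewrite <- Ha; symmetry; exact Hb).
  apply (green_transfer a b t t' _ _ Ha Hb).
  - intros x [HxL HxR]. split; [exact HxL | split].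
    + rewrite Hb. apply greenL_mulr, HxL.
    + apply (greenR_trans S _ a); [apply greenR_sym, H |].
      apply (greenR_trans S _ x); [exact HxR |].
      exact (greenR_step S x t' t (greenL_fix S a t' t x Ea HxL)).
  - intros y [HyL HyR]. split; [exact HyL | split].
    + rewrite Ha. apply greenL_mulr, HyL.
    + apply (greenR_trans S _ b); [exact H |].
      apply (greenR_trans S _ y); [exact HyR |].
      exact (greenR_step S y t t' (greenL_fix S b t t' y Eb HyL)).
Qed.

End Transfer.

Theorem mainTheorem10 (S : Semigroup) (mu : (S -> Prop) -> R)
  (Hmu : fa_prob_measure S mu) :
  (right_fairly_invariant S mu ->
     forall a b : S, greenD S a b -> mu (Lclass S a) = mu (Lclass S b)) /\
  (left_fairly_invariant S mu ->
     forall a b : S, greenD S a b -> mu (Rclass S a) = mu (Rclass S b)) /\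
  (left_fairly_invariant S mu -> right_fairly_invariant S mu ->
     forall a b : S, greenD S a b -> mu (Hclass S a) = mu (Hclass S b)).
Proof.
  (* In each case a L c R b; left invariance of mu is right invariance in the
     opposite semigroup, where a L c becomes a R c. *)
  split; [| split].
  - intros Hr a b [c [Hac Hcb]].
    rewrite (mu_ext S mu _ _ (fun x => Lclass_same S a c x Hac)).
    exact (Lclass_measure_greenR S mu Hr c b Hcb).
  - intros Hl a b [c [Hac Hcb]].
    transitivity (mu (Rclass S c)); [exact (Lclass_measure_greenR (Sop S) mu Hl a c Hac) |].
    exact (mu_ext S mu _ _ (fun x => Rclass_same S c b x Hcb)).
  - intros Hl Hr a b [c [Hac Hcb]].
    transitivity (mu (Hclass S c)).
    + rewrite <- (mu_ext S mu _ _ (Hclass_opp S a)), <- (mu_ext S mu _ _ (Hclass_opp S c)).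
      exact (Hclass_measure_greenR (Sop S) mu Hl a c Hac).
    + exact (Hclass_measure_greenR S mu Hr c b Hcb).
Qed.
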